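(* In the Game of Cycles played on the $K_4$ board (the complete graph on four vertices embedded in the plane, together with its three bounded cells), Player~2 has a winning strategy.
   Context: The Game of Cycles. A board is a simple connected planar graph embedded in the plane, together with its bounded cells (the bounded faces of the embedding). Two players alternate turns; on a turn a player marks one unmarked edge with an arrow pointing along the edge in one of its two directions. Each edge receives at most one arrow, and arrows have the same effect regardless of who placed them. Moves must obey the sink-source rule: no move may create a sink (a vertex all of whose incident edges are marked with arrows pointing toward it) or a source (a vertex all of whose incident edges are marked with arrows pointing away from it). A player who has a legal move must make one. A cycle cell is a bounded cell all of whose boundary edges are marked with arrows all cycling in the same direction (all clockwise or all counterclockwise) around that cell. The first player to create a cycle cell wins; if play ends (no legal move remains) without a cycle cell having been created, the player who made the last move wins. A winning strategy for a player is a rule for choosing moves that guarantees that player wins regardless of the opponent's moves. *)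

From mathcomp Require Import all_boot.
Set Implicit Arguments. Unset Strict Implicit. Unset Printing Implicit Defensive.

(* Vertices are 0,1,2,3; the planar embedding has outer
   triangle 0-1-2 and vertex 3 inside. *)
Definition K4_edges : seq (nat * nat) :=
  [:: (0,1); (0,2); (1,2); (0,3); (1,3); (2,3)].
Definition nedges : nat := size K4_edges.
Definition K4_vertices : seq nat := iota 0 4.
Definition K4_edge_ids : seq nat := iota 0 nedges.

Definition esrc (e : nat) : nat := (nth (0,0) K4_edges e).1.
Definition edst (e : nat) : nat := (nth (0,0) K4_edges e).2.

(* The three bounded cells of the embedding, each given by its three
   boundary vertices (its boundary is the triangle through them). *)
Definition K4_cells : seq (nat * nat * nat) :=
  [:: (0,1,3); (1,2,3); (0,2,3)].

(* A marking: for each edge e < 6: None = unmarked, Some true = arrow from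
   esrc e to edst e, Some false = arrow from edst e to esrc e.
   (Values at indices >= 6 are irrelevant.) *)
Definition marking := nat -> option bool.

Definition empty_marking : marking := fun _ => None.

Definition mark (m : marking) (e : nat) (b : bool) : marking :=
  fun e' => if e' == e then Some b else m e'.

Definition arrow_head (m : marking) (e : nat) : option nat :=
  match m e with
  | Some true => Some (edst e) | Some false => Some (esrc e) | None => None end.
Definition arrow_tail (m : marking) (e : nat) : option nat :=
  match m e with
  | Some true => Some (esrc e) | Some false => Some (edst e) | None => None end.

Definition incident (e v : nat) : bool := (esrc e == v) || (edst e == v).

Definition is_sink (m : marking) (v : nat) : bool :=
  all (fun e => incident e v ==> (arrow_head m e == Some v)) K4_edge_ids.
Definition is_source (m : marking) (v : nat) : bool :=
  all (fun e => incident e v ==> (arrow_tail m e == Some v)) K4_edge_ids.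

Definition no_sink_source (m : marking) : bool :=
  all (fun v => ~~ is_sink m v && ~~ is_source m v) K4_vertices.

Definition arrow (m : marking) (x y : nat) : bool :=
  has (fun e => (arrow_tail m e == Some x) && (arrow_head m e == Some y))
      K4_edge_ids.

Definition cycle_cell (m : marking) (c : nat * nat * nat) : bool :=
  let: (a, b, d) := c in
  (arrow m a b && arrow m b d && arrow m d a) ||
  (arrow m b a && arrow m d b && arrow m a d).

Definition has_cycle_cell (m : marking) : bool := has (cycle_cell m) K4_cells.

Definition legal (m : marking) (e : nat) (b : bool) : bool :=
  [&& e < nedges, m e == None & no_sink_source (mark m e b)].

(* Game semantics, from the point of view of the player about to move in
   position m (a position in which no cycle cell exists):
   - wins m  : the player to move has a winning strategy;
   - loses m : the other player (who just moved / moves second) has a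
               winning strategy.  If the
   player to move has no legal move, play has ended without a cycle cell and
   the player who made the last move wins: loses m then holds vacuously. *)
Inductive wins : marking -> Prop :=
| Wins (m : marking) (e : nat) (b : bool) :
    legal m e b -> has_cycle_cell (mark m e b) \/ loses (mark m e b) -> wins m
with loses : marking -> Prop :=
| Loses (m : marking) :
    (forall (e : nat) (b : bool), legal m e b ->
        ~~ has_cycle_cell (mark m e b) /\ wins (mark m e b)) -> loses m.

From mathcomp Require Import all_boot.

(* Every move marks one of the six edges, so a play lasts at most six moves
   and the game tree, about twenty thousand positions, can be searched
   exhaustively.  A boolean solver, proved sound against [wins] and [loses],
   confirms by evaluation that every opening move of Player 1 leaves Player 2
   a winning continuation. *)

Definition legal_moves (m : marking) : seq (nat * bool) :=
  [seq eb <- [seq (e, b) | e <- K4_edge_ids, b <- [:: true; false]]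
     | legal m eb.1 eb.2].

Lemma mem_legal_moves m e b : ((e, b) \in legal_moves m) = legal m e b.
Proof.
rewrite mem_filter; apply/andP/idP => [[] // | Hl]; split => //.
apply: (allpairs_f pair); last by case: b {Hl}.
by case/and3P: Hl; rewrite mem_iota.
Qed.

(* The solver is run by the call-by-value VM, in which [||] and [&&] evaluate
   both operands; [find] and the [if]s below are what make the search stop at
   the first witness. *)
Definition some_move (P : pred marking) (m : marking) : bool :=
  let ms := legal_moves m in find (fun eb => P (mark m eb.1 eb.2)) ms < size ms.

Definition every_move (P : pred marking) (m : marking) : bool :=
  ~~ some_move (predC P) m.

Lemma some_moveP (P : pred marking) m :
  reflect (exists e b, legal m e b /\ P (mark m e b)) (some_move P m).
Proof.
rewrite /some_move -has_find.
apply: (iffP hasP) => [[[e b]] | [e [b [Hl HP]]]].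
  by rewrite mem_legal_moves => Hl HP; exists e, b.
by exists (e, b); rewrite ?mem_legal_moves.
Qed.

Lemma every_moveP {P : pred marking} {m} :
  every_move P m -> forall e b, legal m e b -> P (mark m e b).
Proof.
move=> Hm e b Hl; apply: contraNT Hm => HP.
by apply/some_moveP; exists e, b.
Qed.

Definition loses_given (w : pred marking) : pred marking :=
  every_move (fun m' => if has_cycle_cell m' then false else w m').

Fixpoint wins_within (n : nat) : pred marking :=
  if n is n'.+1 then
    some_move (fun m' =>
      if has_cycle_cell m' then true else loses_given (wins_within n') m')
  else pred0.

Lemma loses_givenP {w : pred marking} :
  (forall m, w m -> wins m) -> forall m, loses_given w m -> loses m.
Proof.
move=> wW m Hm; apply: Loses => e b /(every_moveP Hm) /=.
by case: has_cycle_cell => // /wW.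
Qed.

Lemma wins_withinP n m : wins_within n m -> wins m.
Proof.
elim: n m => [|n IHn] m //= /some_moveP [e [b [Hl Hm]]].
apply: (Wins Hl); move: Hm => /=.
by case: has_cycle_cell => [_ | /(loses_givenP IHn)]; [left | right].
Qed.

(* After Player 1's opening at most five moves remain, three of them
   Player 2's. *)
Theorem theorem4p1 : loses empty_marking.
Proof. by apply: (loses_givenP (@wins_withinP 3)); vm_compute. Qed.
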